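(* Let $$G:=\Big\{\begin{pmatrix}0&1\\1&0\end{pmatrix}\Big\}\cup\operatorname{conv}\Big\{\begin{pmatrix}1&0\\0&1\end{pmatrix},\begin{pmatrix}1&1\\0&0\end{pmatrix}\Big\}\subseteq s(2).$$ Then the semigroup generated by $G$ equals $s(2)$, and $N_G(s(2))=4$; that is, $G^4=s(2)$ while $G^3\subsetneq s(2)$.
   Context: $s(2)$ is the set of $2\times2$ real matrices with non-negative entries whose columns each sum to $1$, a monoid under matrix multiplication. $\operatorname{conv}$ denotes convex hull. For a subset $G$, the semigroup generated by $G$ is the set of all finite products $g_1\cdots g_m$, $m\ge1$, $g_j\in G$; $G^k$ is the set of products of exactly $k$ elements of $G$. For $x$ in the generated semigroup, $N_G(x)$ is the least $m$ such that $x$ is a product of $m$ elements of $G$, and $N_G(S)=\sup_{x\in S}N_G(x)$. *)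

From HB Require Import structures.
From mathcomp Require Import all_boot all_order all_algebra.
From mathcomp Require Import reals.
Set Implicit Arguments. Unset Strict Implicit. Unset Printing Implicit Defensive.
Import Order.TTheory GRing.Theory Num.Theory.
Local Open Scope ring_scope.

Section Defs.
Variable R : realType.

Definition s2 (A : 'M[R]_2) : Prop :=
  (forall i j, 0 <= A i j) /\ (forall j, \sum_(i < 2) A i j = 1).

Definition swap2 : 'M[R]_2 := \matrix_(i < 2, j < 2) (if i == j then 0 else 1).
Definition E2 : 'M[R]_2 :=
  \matrix_(i < 2, j < 2) (if i == ord0 then 1 else 0).

(* G = {swap} ∪ conv{I, E}; the convex hull of two points is the segment *)
Definition Gset (A : 'M[R]_2) : Prop :=
  A = swap2 \/
  exists t : R, 0 <= t /\ t <= 1 /\ A = (1 - t) *: (1%:M : 'M[R]_2) + t *: E2.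

Fixpoint Gpow (P : 'M[R]_2 -> Prop) (k : nat) (A : 'M[R]_2) : Prop :=
  match k with
  | 0 => A = 1%:M
  | k'.+1 => exists g B, P g /\ Gpow P k' B /\ A = g *m B
  end.

Definition semigroup_gen (P : 'M[R]_2 -> Prop) (A : 'M[R]_2) : Prop :=
  exists m, (0 < m)%N /\ Gpow P m A.

End Defs.

From HB Require Import structures.
From mathcomp Require Import all_boot all_order all_algebra.
From mathcomp Require Import reals ring lra.
Set Implicit Arguments. Unset Strict Implicit. Unset Printing Implicit Defensive.
Import Order.TTheory GRing.Theory Num.Theory.
Local Open Scope ring_scope.

(* A matrix of s(2) is determined by its first row (a, b), a point of the unit
   square.  With S the swap and T t := (1 - t) I + t E, whose first row is
   (1, t), the products T b S T t S and T a S T t T 0 have first rows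
   (1 - t (1 - b), b) and (a, 1 - t (1 - a)); as t ranges over [0, 1] they
   cover b <= a and a <= b respectively, so G^4 = s(2).  Conversely, I = T 0
   lies in G, so G^1 and G^2 sit inside G^3, and multiplying out the eight
   shapes of a product of three elements of G shows that its first row lies on
   the boundary of the square or satisfies a <= b; hence (3/4, 1/4) is missed. *)

Lemma ord2P (i : 'I_2) : i = ord0 \/ i = ord_max.
Proof. by case: i => [[|[|i]] Hi]; [left; apply/eqP | right; apply/eqP | ]. Qed.

Section StochasticByFirstRow.
Variable R : comPzRingType.

Definition stoch2 (a b : R) : 'M[R]_2 :=
  \matrix_(i, j) (let x := if j == ord0 then a else b in
                  if i == ord0 then x else 1 - x).

Lemma stoch2_mul a b c d :
  stoch2 a b *m stoch2 c d = stoch2 (a * c + b * (1 - c)) (a * d + b * (1 - d)).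
Proof.
apply/matrixP => i j; rewrite !mxE !big_ord_recl big_ord0 !mxE /=.
by case: (ord2P i) => ->; case: (ord2P j) => -> /=; ring.
Qed.

Lemma stoch2_inj a b c d : stoch2 a b = stoch2 c d -> a = c /\ b = d.
Proof.
move=> eq_ab_cd; have entry i j := congr1 (fun M : 'M[R]_2 => M i j) eq_ab_cd.
by move: (entry ord0 ord0) (entry ord0 ord_max); rewrite !mxE.
Qed.

Lemma stoch2_first_row (A : 'M[R]_2) :
  (forall j, \sum_(i < 2) A i j = 1) -> A = stoch2 (A ord0 ord0) (A ord0 ord_max).
Proof.
move=> sum1; have row2 j : A ord_max j = 1 - A ord0 j.
  have := sum1 j; rewrite !big_ord_recl big_ord0 addr0 => <-; rewrite addrC addKr.
  by have -> : lift ord0 ord0 = ord_max :> 'I_2 by apply/eqP.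
apply/matrixP => i j; rewrite mxE.
by case: (ord2P i) => ->; case: (ord2P j) => -> /=; rewrite ?row2.
Qed.

End StochasticByFirstRow.

Section Products.
Variable R : realType.
Implicit Types (P S : 'M[R]_2 -> Prop) (A B g : 'M[R]_2).

Lemma Gpow_closed P S :
  S 1%:M -> (forall g B, P g -> S B -> S (g *m B)) -> forall k A, Gpow P k A -> S A.
Proof.
move=> S1 SM; elim=> [|k IH] A /=; first by move->.
by case=> g [B [Pg [PB ->]]]; apply: SM (IH _ PB).
Qed.

Lemma Gpow_foldr P (s : seq 'M[R]_2) A :
  (forall g, g \in s -> P g) -> A = foldr (@mulmx _ 2 2 2) 1%:M s -> Gpow P (size s) A.
Proof.
move=> Ps ->; elim: s Ps => [|g s IH] //= Ps; exists g, (foldr (@mulmx _ 2 2 2) 1%:M s).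
split; first by apply: Ps; rewrite mem_head.
by split=> //; apply: IH => h hs; apply: Ps; rewrite inE hs orbT.
Qed.

Lemma Gpow_leq P m n A : P 1%:M -> (m <= n)%N -> Gpow P m A -> Gpow P n A.
Proof.
move=> P1 /subnK <-; elim: (n - m)%N => // d IH /IH GA.
by rewrite addSn; exists 1%:M, A; rewrite mul1mx.
Qed.

End Products.

Lemma segment_to_1_param (R : realFieldType) (x y : R) :
  x <= y -> y <= 1 -> exists t, [/\ 0 <= t, t <= 1 & y = 1 - t * (1 - x)].
Proof.
move=> xy y1; have [x1 | x_lt1] := leP 1 x; first by exists 0; split; lra.
have x'_gt0 : 0 < 1 - x by lra.
exists ((1 - y) / (1 - x)); rewrite divfK ?gt_eqF //.
by split; [apply: divr_ge0 | rewrite ler_pdivrMr |]; lra.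
Qed.

Section SwapAndSegment.
Variable R : realType.
Implicit Types (a b t : R) (A B g : 'M[R]_2).
Local Notation G := (@Gset R).

Lemma swap2_stoch2 : swap2 R = stoch2 0 1.
Proof.
apply/matrixP => i j; rewrite !mxE.
by case: (ord2P i) => ->; case: (ord2P j) => -> /=; rewrite ?subrr ?subr0.
Qed.

Lemma idmx_stoch2 : 1%:M = stoch2 1 0 :> 'M[R]_2.
Proof.
apply/matrixP => i j; rewrite !mxE.
by case: (ord2P i) => ->; case: (ord2P j) => -> /=; rewrite ?subrr ?subr0.
Qed.

Lemma segment_stoch2 t : (1 - t) *: 1%:M + t *: E2 R = stoch2 1 t.
Proof.
apply/matrixP => i j; rewrite !mxE.
by case: (ord2P i) => ->; case: (ord2P j) => -> /=; ring.
Qed.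

Lemma Gset_swap : G (stoch2 0 1).
Proof. by left; rewrite swap2_stoch2. Qed.

Lemma Gset_segment t : 0 <= t -> t <= 1 -> G (stoch2 1 t).
Proof. by move=> t0 t1; right; exists t; rewrite segment_stoch2. Qed.

Lemma GsetP g :
  G g <-> g = stoch2 0 1 \/ exists t, [/\ 0 <= t, t <= 1 & g = stoch2 1 t].
Proof.
split=> [[->|[t [t0 [t1 ->]]]] | [->|[t [t0 t1 ->]]]].
- by left; rewrite swap2_stoch2.
- by right; exists t; rewrite segment_stoch2.
- exact: Gset_swap.
- exact: Gset_segment.
Qed.

Lemma s2P A :
  s2 A <-> exists a b, [/\ 0 <= a, a <= 1, 0 <= b, b <= 1 & A = stoch2 a b].
Proof.
split=> [[nonneg /stoch2_first_row eA] | [a [b [a0 a1 b0 b1 ->]]]].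
  exists (A ord0 ord0), (A ord0 ord_max).
  have entry_ge0 i j : 0 <= stoch2 (A ord0 ord0) (A ord0 ord_max) i j by rewrite -eA.
  move: (entry_ge0 ord0 ord0) (entry_ge0 ord_max ord0).
  move: (entry_ge0 ord0 ord_max) (entry_ge0 ord_max ord_max).
  by rewrite !mxE /= !subr_ge0.
split=> [i j | j]; rewrite ?big_ord_recl ?big_ord0 !mxE.
  by case: (ord2P i) => ->; case: (ord2P j) => -> /=; rewrite ?subr_ge0.
by case: (ord2P j) => -> /=; rewrite addr0 subrKC.
Qed.

Lemma s2_1 : s2 (1%:M : 'M[R]_2).
Proof. by apply/s2P; exists 1, 0; split; rewrite ?idmx_stoch2 //; lra. Qed.

Lemma s2_mul A B : s2 A -> s2 B -> s2 (A *m B).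
Proof.
move=> /s2P[a [b [a0 a1 b0 b1 ->]]] /s2P[c [d [c0 c1 d0 d1 ->]]].
by rewrite stoch2_mul; apply/s2P; do 2 eexists; split; last reflexivity; nra.
Qed.

Lemma Gset_s2 g : G g -> s2 g.
Proof.
by case/GsetP=> [->|[t [t0 t1 ->]]]; apply/s2P; [exists 0, 1 | exists 1, t]; split=> //; lra.
Qed.

Lemma Gpow_s2 k A : Gpow G k A -> s2 A.
Proof. by apply: Gpow_closed k A => [|g B /Gset_s2]; [exact: s2_1 | exact: s2_mul]. Qed.

Lemma Gpow4_stoch2_below a b : 0 <= b -> b <= a -> a <= 1 -> Gpow G 4 (stoch2 a b).
Proof.
move=> b0 ba a1; have [t [t0 t1 ->]] := segment_to_1_param ba a1.
apply: (@Gpow_foldr _ _ [:: stoch2 1 b; stoch2 0 1; stoch2 1 t; stoch2 0 1]).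
  move=> g; rewrite !inE => /or4P[]/eqP->;
    by [exact: Gset_swap | apply: Gset_segment; lra].
by rewrite /= mulmx1 !stoch2_mul; congr stoch2; ring.
Qed.

Lemma Gpow4_stoch2_above a b : 0 <= a -> a <= b -> b <= 1 -> Gpow G 4 (stoch2 a b).
Proof.
move=> a0 ab b1; have [t [t0 t1 ->]] := segment_to_1_param ab b1.
apply: (@Gpow_foldr _ _ [:: stoch2 1 a; stoch2 0 1; stoch2 1 t; stoch2 1 0]).
  move=> g; rewrite !inE => /or4P[]/eqP->;
    by [exact: Gset_swap | apply: Gset_segment; lra].
by rewrite /= mulmx1 !stoch2_mul; congr stoch2; ring.
Qed.

Lemma s2_Gpow4 A : s2 A -> Gpow G 4 A.
Proof.
case/s2P=> a [b [a0 a1 b0 b1 ->]]; have [ba | /ltW ab] := leP b a.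
- exact: Gpow4_stoch2_below.
- exact: Gpow4_stoch2_above.
Qed.

Lemma Gpow3_interior_le a b : Gpow G 3 (stoch2 a b) ->
  0 < a -> a < 1 -> 0 < b -> b < 1 -> a <= b.
Proof.
case=> g1 [_ [G1 [[g2 [_ [G2 [[g3 [_ [G3 [-> ->]]]] ->]]]] ]]]; rewrite mulmx1.
case/GsetP: G1 => [->|[r [r0 r1 ->]]]; case/GsetP: G2 => [->|[s [s0 s1 ->]]];
  case/GsetP: G3 => [->|[t [t0 t1 ->]]]; rewrite !stoch2_mul => /stoch2_inj[-> ->]; nra.
Qed.

End SwapAndSegment.

Theorem proposition2 (R : realType) :
  (forall A : 'M[R]_2, semigroup_gen (@Gset R) A <-> s2 A) /\
  (forall A : 'M[R]_2, s2 A -> exists m, (0 < m <= 4)%N /\ Gpow (@Gset R) m A) /\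
  (exists A : 'M[R]_2, s2 A /\ forall m, (0 < m < 4)%N -> ~ Gpow (@Gset R) m A) /\
  (forall A : 'M[R]_2, Gpow (@Gset R) 4 A <-> s2 A) /\
  (forall A : 'M[R]_2, Gpow (@Gset R) 3 A -> s2 A) /\
  (exists A : 'M[R]_2, s2 A /\ ~ Gpow (@Gset R) 3 A).
Proof.
have G1 : Gset (1%:M : 'M[R]_2) by rewrite idmx_stoch2; apply: Gset_segment; lra.
pose A0 : 'M[R]_2 := stoch2 (3 / 4) (1 / 4).
have A0_s2 : s2 A0 by apply/s2P; exists (3 / 4), (1 / 4); split=> //; lra.
have A0_notG3 m : (m <= 3)%N -> ~ Gpow (@Gset R) m A0.
  by move=> m3 /(Gpow_leq G1 m3) /Gpow3_interior_le; lra.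
split; [|split; [|split; [|split; [|split]]]].
- by move=> A; split=> [[m [_ /Gpow_s2]] // | /s2_Gpow4 GA]; exists 4%N.
- by move=> A /s2_Gpow4 GA; exists 4%N.
- by exists A0; split=> // m /andP[_ m3]; apply: A0_notG3.
- by move=> A; split; [apply: Gpow_s2 | apply: s2_Gpow4].
- by move=> A; apply: Gpow_s2.
- by exists A0; split=> //; apply: A0_notG3.
Qed.
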